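(* For every formula $\varphi$ of Hennessy–Milner logic, the sets $[\![\varphi]\!]^a$ and $[\![\varphi]\!]^c$ are clopen in the Lawson topology of $\mathbb{D}$. In particular, $C_\Phi$ is Lawson-closed.
   Context: Fix a finite set $\mathrm{Act}$ of events. For a dcpo $D$, $K(D)$ denotes its compact elements; a bifinite (SFP) domain is an algebraic dcpo in which for each finite $F\subseteq K(D)$ iterated minimal-upper-bound sets are finite and in $K(D)$ and every upper bound of $F$ is above a minimal upper bound. Scott topology: sets $U={\uparrow}(U\cap K(D))$; Lawson topology generated by ${\uparrow}k\setminus{\uparrow}l$, $k,l\in K(D)$. Mixed powerdomain $\mathcal{M}(D)$: pairs $(L,U)$, $L$ Scott-closed, $U$ Lawson-closed upper, $L={\downarrow}(L\cap U)$, ordered by $L\subseteq L'$ and $U'\subseteq U$. $\mathbb{D}$ is the initial solution over bifinite domains of $\mathbb{D}\cong\prod_{\alpha\in\mathrm{Act}}\mathcal{M}(\mathbb{D})$, $d=((L^d_\alpha,U^d_\alpha))_\alpha$, viewed as a mixed transition system $(\mathbb{D},\mathbb{R}^a,\mathbb{R}^c)$ with $(d,\alpha,d')\in\mathbb{R}^a$ iff $d'\in L^d_\alpha$ and $(d,\alpha,d')\in\mathbb{R}^c$ iff $d'\in U^d_\alpha$. Hennessy–Milner logic: $\varphi::=tt\mid\neg\varphi\mid\langle\alpha\rangle\varphi\mid\varphi\wedge\varphi$; $[\alpha]\varphi:=\neg\langle\alpha\rangle\neg\varphi$, $\varphi\vee\psi:=\neg(\neg\varphi\wedge\neg\psi)$;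 empty conjunction $tt$, empty disjunction $\neg tt$. For $m\in\{a,c\}$ ($\neg a=c$, $\neg c=a$): $(\mathbb{D},d)\models^m tt$; $\models^m\neg\varphi$ iff not $\models^{\neg m}\varphi$; $(\mathbb{D},d)\models^m\langle\alpha\rangle\varphi$ iff $(\mathbb{D},d')\models^m\varphi$ for some $(d,\alpha,d')\in\mathbb{R}^m$; $\wedge$ componentwise. $[\![\varphi]\!]^m=\{d\in\mathbb{D} : (\mathbb{D},d)\models^m\varphi\}$. Process terms $p::=\mathbf{0}\mid\bot\mid\alpha_{tt}.p\mid\alpha_\bot.p\mid p+p$ (no summand of $+$ equal to $\mathbf{0}$ or $\bot$). Transitions: $\bot\xrightarrow{\gamma}_\bot\bot$ for all $\gamma$; $\alpha_{tt}.p\xrightarrow{\alpha}_{tt}p$; $\alpha_\bot.p\xrightarrow{\alpha}_\bot p$; if $p\xrightarrow{\alpha}_v p'$ then $p+q\xrightarrow{\alpha}_v p'$ and $q+p\xrightarrow{\alpha}_v p'$. Formulas: $\varphi_{\mathbf{0}}=\bigwedge_\alpha\neg\langle\alpha\rangle tt$; $\varphi_\bot=tt$; $\varphi_{\alpha_{tt}.p}=\langle\alpha\rangle\varphi_p\wedge[\alpha]\varphi_p\wedge\bigwedge_{\beta\ne\alpha}\neg\langle\beta\rangle tt$; $\varphi_{\alpha_\bot.p}=[\alpha]\varphi_p\wedge\bigwedge_{\beta\ne\alpha}\neg\langle\beta\rangle tt$; $\varphi_{p+q}=\bigwedge\{\langle\alpha\rangle\varphi_{r'} : p+q\xrightarrow{\alpha}_{tt}r'\}\wedge\bigwedge_\alpha[\alpha]\bigvee\{\varphi_{r'}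 : p+q\xrightarrow{\alpha}_v r',\ v\in\{\bot,tt\}\}$. For $w=\delta_1\cdots\delta_n\in\mathrm{Act}^*$, $\alpha\in\mathrm{Act}$, term $p$: $\psi_{w,\alpha,p}=[\delta_1]\cdots[\delta_n](\langle\alpha\rangle\varphi_p\vee\neg\langle\alpha\rangle\varphi_p)$; $\Phi$ is the set of all such formulas; $C_\Phi=\bigcap_{\psi\in\Phi}[\![\psi]\!]^a$. *)

From mathcomp Require Import all_boot.
From Stdlib Require List.

Set Implicit Arguments.
Unset Strict Implicit.
Unset Printing Implicit Defensive.

Section OrderTheory.
Variables (T : Type) (le : T -> T -> Prop).

Definition partial_order : Prop :=
  (forall x, le x x) /\
  (forall x y z, le x y -> le y z -> le x z) /\
  (forall x y, le x y -> le y x -> x = y).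

Definition upper_bound (S : T -> Prop) (u : T) : Prop := forall x, S x -> le x u.

Definition is_lub (S : T -> Prop) (s : T) : Prop :=
  upper_bound S s /\ forall u, upper_bound S u -> le s u.

Definition directed (S : T -> Prop) : Prop :=
  (exists x, S x) /\
  forall x y, S x -> S y -> exists z, S z /\ le x z /\ le y z.

Definition is_dcpo : Prop := forall S, directed S -> exists s, is_lub S s.

Definition compact (k : T) : Prop :=
  forall S s, directed S -> is_lub S s -> le k s -> exists x, S x /\ le k x.

Definition algebraic : Prop :=
  forall x, directed (fun k => compact k /\ le k x) /\
            is_lub (fun k => compact k /\ le k x) x.

Definition mub (F : list T) (m : T) : Prop :=
  upper_bound (fun x => List.In x F) m /\
  forall u, upper_bound (fun x => List.In x F) u -> le u m -> le m u.

Inductive mubcl (F : list T) : T -> Prop :=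
| mubcl_base x : List.In x F -> mubcl F x
| mubcl_step (G : list T) m :
    (forall y, List.In y G -> mubcl F y) -> mub G m -> mubcl F m.

Definition bifinite : Prop :=
  is_dcpo /\ algebraic /\
  forall F : list T, (forall x, List.In x F -> compact x) ->
    (exists l : list T, forall x, mubcl F x <-> List.In x l) /\
    (forall x, mubcl F x -> compact x) /\
    (forall u, upper_bound (fun x => List.In x F) u ->
       exists m, mub F m /\ le m u).

Definition upper (U : T -> Prop) : Prop := forall x y, U x -> le x y -> U y.

Definition scott_open (U : T -> Prop) : Prop :=
  forall x, U x <-> exists k, compact k /\ U k /\ le k x.

Definition scott_closed (C : T -> Prop) : Prop := scott_open (fun x => ~ C x).

Definition lawson_subbasic (k l : T) (x : T) : Prop := le k x /\ ~ le l x.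

(* open sets of the topology generated by the subbasis: unions of finite
   intersections of subbasic sets (k, l compact) *)
Definition lawson_open (U : T -> Prop) : Prop :=
  forall x, U x -> exists B : list (T * T),
    (forall kl, List.In kl B -> compact kl.1 /\ compact kl.2) /\
    (forall kl, List.In kl B -> lawson_subbasic kl.1 kl.2 x) /\
    (forall y, (forall kl, List.In kl B -> lawson_subbasic kl.1 kl.2 y) -> U y).

Definition lawson_closed (C : T -> Prop) : Prop := lawson_open (fun x => ~ C x).

Definition lawson_clopen (U : T -> Prop) : Prop := lawson_open U /\ lawson_closed U.

Definition is_mixed (LU : (T -> Prop) * (T -> Prop)) : Prop :=
  scott_closed LU.1 /\ lawson_closed LU.2 /\ upper LU.2 /\
  forall x, LU.1 x <-> exists y, LU.1 y /\ LU.2 y /\ le x y.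

Definition scott_closure (A : T -> Prop) (x : T) : Prop :=
  forall C, scott_closed C -> (forall y, A y -> C y) -> C x.

(* functorial action of the mixed powerdomain on a map h *)
Definition Mmap (h : T -> T) (LU : (T -> Prop) * (T -> Prop))
  : (T -> Prop) * (T -> Prop) :=
  (scott_closure (fun y => exists x, LU.1 x /\ y = h x),
   fun y => exists x, LU.2 x /\ le (h x) y).

End OrderTheory.

Definition seteq (T : Type) (A B : T -> Prop) : Prop := forall x, A x <-> B x.

Definition paireq (T : Type) (P Q : (T -> Prop) * (T -> Prop)) : Prop :=
  seteq P.1 Q.1 /\ seteq P.2 Q.2.

(* The domain  D ~= prod_{alpha in Act} M(D), initial solution           *)
(* iota d alpha = (L^d_alpha, U^d_alpha); iinv is the inverse iso.       *)
(* Initiality is expressed by the minimal-invariant property:           *)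
(* id_D = sup_n p_n with p_0 = bottom, p_{n+1} = iota^-1 o F(p_n) o iota *)
Record initial_solution (Act : finType) (D : Type) (le : D -> D -> Prop)
  (iota : D -> Act -> (D -> Prop) * (D -> Prop))
  (iinv : (Act -> (D -> Prop) * (D -> Prop)) -> D) : Prop := {
  sol_po : partial_order le;
  sol_bifinite : bifinite le;
  sol_valid : forall d a, is_mixed le (iota d a);
  sol_order : forall d d', le d d' <->
     forall a, (forall x, (iota d a).1 x -> (iota d' a).1 x) /\
               (forall x, (iota d' a).2 x -> (iota d a).2 x);
  sol_iinv_iota : forall d, iinv (iota d) = d;
  sol_iota_iinv : forall P, (forall a, is_mixed le (P a)) ->
     forall a, paireq (iota (iinv P) a) (P a);
  sol_minimal : exists p : nat -> D -> D,
     (forall d x, le (p 0 d) x) /\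
     (forall n d a, paireq (iota (p n.+1 d) a) (Mmap le (p n) (iota d a))) /\
     (forall d, is_lub le (fun x => exists n, x = p n d) d)
}.

Inductive form (Act : Type) : Type :=
| Ftt
| Fneg of form Act
| Fdia of Act & form Act
| Fand of form Act & form Act.

Arguments Ftt {Act}.

Definition Fbox (Act : Type) (a : Act) (f : form Act) : form Act :=
  Fneg (Fdia a (Fneg f)).
Definition For (Act : Type) (f g : form Act) : form Act :=
  Fneg (Fand (Fneg f) (Fneg g)).
Definition bigand (Act : Type) (l : seq (form Act)) : form Act := foldr (@Fand Act) Ftt l.
Definition bigor (Act : Type) (l : seq (form Act)) : form Act :=
  foldr (@For Act) (Fneg Ftt) l.

Inductive mode := Ma | Mc.
Definition negm (m : mode) : mode := match m with Ma => Mc | Mc => Ma end.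

Section Semantics.
Variables (Act : finType) (D : Type) (iota : D -> Act -> (D -> Prop) * (D -> Prop)).

Definition trans_rel (m : mode) (d : D) (a : Act) (d' : D) : Prop :=
  match m with Ma => (iota d a).1 d' | Mc => (iota d a).2 d' end.

Fixpoint sat (m : mode) (f : form Act) (d : D) : Prop :=
  match f with
  | Ftt => True
  | Fneg g => ~ sat (negm m) g d
  | Fdia a g => exists d', trans_rel m d a d' /\ sat m g d'
  | Fand g h => sat m g d /\ sat m h d
  end.

Definition sem (m : mode) (f : form Act) : D -> Prop := fun d => sat m f d.

End Semantics.

Inductive proc (Act : Type) : Type :=
| P0
| Pbot
| Ptt of Act & proc Act
| Pbp of Act & proc Act
| Psum of proc Act & proc Act.

Arguments P0 {Act}.
Arguments Pbot {Act}.

Fixpoint wf_proc (Act : Type) (p : proc Act) : Prop :=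
  match p with
  | P0 | Pbot => True
  | Ptt _ q | Pbp _ q => wf_proc q
  | Psum q r => wf_proc q /\ wf_proc r /\
      q <> P0 /\ q <> Pbot /\ r <> P0 /\ r <> Pbot
  end.

Section CharFormulas.
Variable Act : finType.

Definition no_other (a : Act) : form Act :=
  bigand [seq Fneg (Fdia b Ftt) | b <- enum Act & b != a].

(* charf p = (phi_p, list of transitions (alpha, v, phi_{p'}) of p,
   with v = true for ->_tt and v = false for ->_bot).  The transition list
   follows the SOS rules literally:  bot -gamma->_bot bot for all gamma,
   alpha_v.p -alpha->_v p, and transitions of p+q are those of p and q. *)
Fixpoint charf (p : proc Act) : form Act * seq (Act * bool * form Act) :=
  match p with
  | P0 => (bigand [seq Fneg (Fdia b Ftt) | b <- enum Act], [::])
  | Pbot => (Ftt, [seq (g, false, Ftt) | g <- enum Act])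
  | Ptt a q => let f := (charf q).1 in
      (Fand (Fdia a f) (Fand (Fbox a f) (no_other a)), [:: (a, true, f)])
  | Pbp a q => let f := (charf q).1 in
      (Fand (Fbox a f) (no_other a), [:: (a, false, f)])
  | Psum q r => let t := (charf q).2 ++ (charf r).2 in
      (Fand (bigand [seq Fdia x.1.1 x.2 | x <- t & x.1.2])
            (bigand [seq Fbox a (bigor [seq x.2 | x <- t & x.1.1 == a])
                    | a <- enum Act]),
       t)
  end.

Definition phi_p (p : proc Act) : form Act := (charf p).1.

Definition psi (w : seq Act) (a : Act) (p : proc Act) : form Act :=
  foldr (@Fbox Act) (For (Fdia a (phi_p p)) (Fneg (Fdia a (phi_p p)))) w.

End CharFormulas.

Definition C_Phi (Act : finType) (D : Type)
  (iota : D -> Act -> (D -> Prop) * (D -> Prop)) : D -> Prop :=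
  fun d => forall (w : seq Act) (a : Act) (p : proc Act),
    wf_proc p -> sem iota Ma (psi w a p) d.

(* Let p_n be the approximants of the identity of D given by initiality.  By
   induction, p_n is monotone, p_m o p_n = p_(min m n), and p_n has finite image.
   Satisfaction of a formula of modal depth at most n is invariant under p_n,
   [[phi]]^a is an upper set and [[phi]]^c a lower set.  The crux is that every
   p_n d is compact: p_n preserves directed suprema, because the isomorphism
   with the mixed powerdomain does, and that rests on the compactness of the
   Lawson topology, proved by a Koenig-type argument along the finite images of
   the p_n.  Then [[phi]]^a is the union of the Lawson-open cones up(p_n d) over
   its points d and the finite union of the Lawson-closed cones up(e) over its
   elements e of the image of p_n; [[phi]]^c is the complement of [[~phi]]^a,
   and C_Phi is an intersection of Lawson-closed sets. *)

From mathcomp Require Import all_boot.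
From Stdlib Require Import Classical FunctionalExtensionality PropExtensionality ClassicalEpsilon.
From Stdlib Require List.

Set Implicit Arguments.
Unset Strict Implicit.
Unset Printing Implicit Defensive.

Lemma pred_ext (T : Type) (A B : T -> Prop) : (forall x, A x <-> B x) -> A = B.
Proof.
by move=> AB; apply: functional_extensionality => x; apply: propositional_extensionality.
Qed.

Lemma list_of_subsets (T : Type) (l : list T) : exists PL : list (T -> Prop),
  forall A : T -> Prop, (forall y, A y -> List.In y l) -> List.In A PL.
Proof.
elim: l => [|a l [PL IH]].
  exists [:: fun _ => False] => A HA; left.
  by apply: pred_ext => y; split=> // /HA [].
exists (PL ++ map (fun B y => y = a \/ B y) PL) => A HA.
have Aa_in : List.In (fun y => A y /\ y <> a) PL.
  by apply: IH => y [/HA [->|] //].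
apply/List.in_or_app; case: (classic (A a)) => Aa; [right|left].
  apply/List.in_map_iff; exists (fun y => A y /\ y <> a); split=> //.
  apply: pred_ext => y; split=> [[->|[]] //|Ay].
  by case: (classic (y = a)); [left|right].
suff -> : A = (fun y => A y /\ y <> a) by [].
by apply: pred_ext => y; split=> [Ay|[] //]; split=> // ya; apply: Aa; rewrite -ya.
Qed.

Lemma list_of_functions (K : finType) (X : Type) (x0 : X) (l : list X) :
  exists FL : list (K -> X), forall f, (forall a, List.In (f a) l) -> List.In f FL.
Proof.
suff /(_ (enum K)) [FL HF] : forall ks : seq K, exists FL : list (K -> X), forall f,
    (forall a, List.In (f a) l) -> exists2 g, List.In g FL & {in ks, f =1 g}.
  exists FL => f /HF [g Hg fg].
  suff -> : f = g by [].
  by apply: functional_extensionality => a; apply: fg; rewrite mem_enum.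
elim=> [|k ks [FL IH]].
  by exists [:: fun _ => x0] => f _; exists (fun _ => x0); first left.
exists (List.flat_map (fun x => map (fun g a => if a == k then x else g a) FL) l).
move=> f Hf; have [g Hg fg] := IH f Hf.
exists (fun a => if a == k then f k else g a).
  by apply/List.in_flat_map; exists (f k); split=> //; apply/List.in_map_iff; exists g.
by move=> a; rewrite inE; case: eqP => [->|_ /fg].
Qed.

Lemma list_filter_exists (T : Type) (P : T -> Prop) (l : list T) :
  exists l', forall e, List.In e l' <-> List.In e l /\ P e.
Proof.
exists (List.filter (fun e => if excluded_middle_informative (P e) then true else false) l).
move=> e; rewrite List.filter_In.
by case: excluded_middle_informative => Pe; split=> -[].
Qed.

Lemma eventually_all_in (T : Type) (P : T -> nat -> Prop) (l : list T) :
  (forall t, List.In t l -> exists N, forall m, N <= m -> P t m) ->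
  exists N, forall t, List.In t l -> forall m, N <= m -> P t m.
Proof.
elim: l => [|t l IH] H; first by exists 0.
have [N1 H1] := IH (fun t' Ht' => H t' (or_intror Ht')).
have [N2 H2] := H t (or_introl erefl).
exists (maxn N1 N2) => t' [<-|Ht'] m; rewrite geq_max => /andP[N1m N2m]; auto.
Qed.

Section OrderFacts.
Variables (D : Type) (le : D -> D -> Prop).
Hypothesis le_refl : forall x, le x x.
Hypothesis le_trans : forall x y z, le x y -> le y z -> le x z.
Hypothesis le_alg : algebraic le.

Lemma directed_common (S : D -> Prop) (T : Type) (P : T -> D -> Prop) (l : list T) :
  directed le S -> (forall t x x', P t x -> le x x' -> P t x') ->
  (forall t, List.In t l -> exists2 x, S x & P t x) ->
  exists2 x, S x & forall t, List.In t l -> P t x.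
Proof.
move=> [[x0 Sx0] Sdir] Pup; elim: l => [|t l IH] H; first by exists x0.
have [x1 Sx1 P1] := H t (or_introl erefl).
have [x2 Sx2 P2] := IH (fun t' Ht' => H t' (or_intror Ht')).
have [z [Sz [x1z x2z]]] := Sdir _ _ Sx1 Sx2.
by exists z => // t' [<-|/P2 Pt']; apply: Pup; eauto.
Qed.

Lemma directed_mono_seq (f : nat -> D) :
  (forall i j, i <= j -> le (f i) (f j)) -> directed le (fun x => exists n, x = f n).
Proof.
move=> fmono; split; first by exists (f 0), 0.
move=> _ _ [i ->] [j ->]; exists (f (maxn i j)); split; first by exists (maxn i j).
by split; apply: fmono; rewrite ?leq_maxl ?leq_maxr.
Qed.

Lemma directed_finite_image_max (S : D -> Prop) (f : D -> D) (E : list D) :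
  directed le S -> (forall x y, le x y -> le (f x) (f y)) -> (forall x, List.In (f x) E) ->
  exists2 x0, S x0 & forall x, S x -> le (f x) (f x0).
Proof.
move=> Sdir fmono fE.
pose P e x := forall y, S y -> f y = e -> le e (f x).
have [x0 Sx0 Hx0] : exists2 x0, S x0 & forall e, List.In e E -> P e x0.
  apply: (directed_common Sdir).
- by move=> e x x' Pex xx' y Sy fy; apply: le_trans (Pex y Sy fy) (fmono _ _ xx').
- move=> e _; case: (classic (exists2 y, S y & f y = e)) => [[y Sy <-]|ne].
    by exists y => // y' _ ->.
  by case: Sdir => -[x Sx] _; exists x => // y Sy fy; case: ne; exists y.
by exists x0 => // x Sx; apply: Hx0 (fE x) x Sx erefl.
Qed.

Lemma scott_closed_down (C : D -> Prop) x y :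
  scott_closed le C -> le x y -> C y -> C x.
Proof.
move=> HC xy Cy; apply: NNPP => /(proj1 (HC x)) [k [ck [nCk kx]]].
by apply: (proj2 (HC y)) Cy; exists k; split=> //; split=> //; apply: le_trans xy.
Qed.

Lemma scott_closure_ub (A : D -> Prop) x : A x -> scott_closure le A x.
Proof. by move=> Ax C _; apply. Qed.

Lemma scott_closure_least (A C : D -> Prop) :
  scott_closed le C -> (forall y, A y -> C y) -> forall x, scott_closure le A x -> C x.
Proof. by move=> HC AsubC x; apply. Qed.

Lemma scott_closure_mono (A B : D -> Prop) x :
  (forall y, A y -> B y) -> scott_closure le A x -> scott_closure le B x.
Proof. by move=> AB Ax C HC BC; apply: Ax => // y /AB /BC. Qed.

Lemma scott_closure_down (A : D -> Prop) x y :
  le x y -> scott_closure le A y -> scott_closure le A x.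
Proof. by move=> xy Ay C HC AsubC; apply: scott_closed_down HC xy (Ay C HC AsubC). Qed.

Lemma scott_closure_closed (A : D -> Prop) : scott_closed le (scott_closure le A).
Proof.
move=> x; split=> [nAx|[k [_ [nAk kx]] Ax]]; last exact: nAk (scott_closure_down kx Ax).
apply: NNPP => H; apply: nAx => C HC AsubC; apply: NNPP => /(proj1 (HC x)) [k [ck [nCk kx]]].
by apply: H; exists k; split=> //; split=> // Ak; exact: nCk (Ak C HC AsubC).
Qed.

Lemma compact_not_le x y : ~ le y x -> exists c, [/\ compact le c, le c y & ~ le c x].
Proof.
move=> nyx; apply: NNPP => H; apply: nyx; apply: (proj2 (le_alg y).2) => c [cc cy].
by apply: NNPP => ncx; apply: H; exists c.
Qed.

Lemma down_list_scott_closed (A : D -> Prop) (E : list D) :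
  (forall y, A y -> List.In y E) -> scott_closed le (fun x => exists2 a, A a & le x a).
Proof.
move=> AE x; split=> [nx|[k [_ [nk kx]] [a Aa xa]]]; last by apply: nk; exists a => //; eauto.
pose P a k := A a -> ~ le k a.
have [k [ck kx] Hk] : exists2 k, compact le k /\ le k x & forall a, List.In a E -> P a k.
  apply: (directed_common (le_alg x).1).
- by move=> a k k' Pk kk' Aa k'a; apply: Pk Aa (le_trans kk' k'a).
- move=> a _; case: (classic (A a)) => Aa; last by case: (le_alg x).1 => -[k Hk] _; exists k.
  have [|c [cc cx nca]] := @compact_not_le a x; last by exists c => // _.
  by move=> xa; apply: nx; exists a.
exists k; split=> //; split=> // -[a Aa ka]; exact: Hk a (AE a Aa) Aa ka.
Qed.

Lemma scott_closure_list (A : D -> Prop) (E : list D) :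
  (forall y, A y -> List.In y E) -> scott_closure le A = (fun x => exists2 a, A a & le x a).
Proof.
move=> AE; apply: pred_ext => x; split.
  by apply: (scott_closure_least (down_list_scott_closed AE)) => y Ay; exists y.
by case=> a Aa xa; apply: scott_closure_down xa (scott_closure_ub Aa).
Qed.

Lemma lawson_open_and (A B : D -> Prop) :
  lawson_open le A -> lawson_open le B -> lawson_open le (fun x => A x /\ B x).
Proof.
move=> HA HB x [Ax Bx].
have [BA [cA [xA sA]]] := HA x Ax; have [BB [cB [xB sB]]] := HB x Bx.
exists (BA ++ BB); split; [|split].
- by move=> kl; rewrite List.in_app_iff => -[] ?; [apply: cA|apply: cB].
- by move=> kl; rewrite List.in_app_iff => -[] ?; [apply: xA|apply: xB].
- move=> y Hy; split; [apply: sA|apply: sB] => kl Hkl; apply: Hy; apply: List.in_or_app; auto.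
Qed.

Lemma lawson_closed_or (A B : D -> Prop) :
  lawson_closed le A -> lawson_closed le B -> lawson_closed le (fun x => A x \/ B x).
Proof.
move=> HA HB x /not_or_and nAB; have [B0 [cB [xB sB]]] := lawson_open_and HA HB nAB.
by exists B0; split=> //; split=> // y /sB [nA nB] [].
Qed.

Lemma lawson_closed_and (A B : D -> Prop) :
  lawson_closed le A -> lawson_closed le B -> lawson_closed le (fun x => A x /\ B x).
Proof.
move=> HA HB x /not_and_or [/(HA x)|/(HB x)] [B0 [cB [xB sB]]];
  by exists B0; split=> //; split=> // y /sB nC [].
Qed.

Lemma lawson_closed_forall (T : Type) (C : T -> D -> Prop) :
  (forall t, lawson_closed le (C t)) -> lawson_closed le (fun x => forall t, C t x).
Proof.
move=> HC x /not_all_ex_not [t /(HC t x) [B0 [cB [xB sB]]]].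
by exists B0; split=> //; split=> // y /sB nC Cy; apply/nC/Cy.
Qed.

Lemma lawson_closed_list_union (T : Type) (C : T -> D -> Prop) (E : list T) :
  (forall e, List.In e E -> lawson_closed le (C e)) ->
  lawson_closed le (fun x => exists2 e, List.In e E & C e x).
Proof.
elim: E => [|e E IH] HC.
  by move=> x _; exists [::]; split=> //; split=> // y _ [].
have -> : (fun x => exists2 e', List.In e' (e :: E) & C e' x) =
          (fun x => C e x \/ exists2 e', List.In e' E & C e' x).
  apply: pred_ext => x; split=> [[e' [<-|He'] Cx]|[Cx|[e' He' Cx]]]; [by left|right|..].
  - by exists e'.
  - by exists e; first left.
  - by exists e'; first right.
apply: lawson_closed_or; first by apply: HC; left.
by apply: IH => e' He'; apply: HC; right.
Qed.

Lemma lawson_clopen_compl (A : D -> Prop) :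
  lawson_clopen le A -> lawson_clopen le (fun x => ~ A x).
Proof.
case=> Aopen Aclosed; split=> // x /NNPP /Aopen [B0 [cB [xB sB]]].
by exists B0; split=> //; split=> // y /sB Ay; apply.
Qed.

Lemma lawson_open_subsingleton (A : D -> Prop) : (forall x y : D, x = y) -> lawson_open le A.
Proof. by move=> Dsub x Ax; exists [::]; split=> //; split=> // y _; rewrite (Dsub y x). Qed.

Lemma bifinite_least_compact (b : D) :
  bifinite le -> (forall x y, le x y -> le y x -> x = y) -> (forall x, le b x) -> compact le b.
Proof.
move=> [_ [_ Hmub]] le_anti b_least.
have nilc : forall x, List.In x [::] -> compact le x by [].
have [_ [mubc mub_le]] := Hmub [::] nilc.
have [m [mub_m mb]] := mub_le b (fun x (H : List.In x [::]) => match H with end).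
by rewrite -(le_anti _ _ mb (b_least m)); apply/mubc/(@mubcl_step _ _ _ [::]).
Qed.

Section Bottom.
Variable bot : D.
Hypothesis bot_compact : compact le bot.
Hypothesis bot_least : forall x, le bot x.

Lemma lawson_closed_up y : lawson_closed le (fun x => le y x).
Proof.
move=> x /compact_not_le [c [cc cy ncx]].
exists [:: (bot, c)]; split; first by move=> kl [<-|[]].
split; first by move=> kl [<-|[]]; split.
by move=> z /(_ _ (or_introl erefl)) [_ ncz] yz; apply/ncz/(le_trans cy yz).
Qed.

End Bottom.

Section NoTop.
Hypothesis no_top : forall x, exists2 l, compact le l & ~ le l x.

Lemma lawson_open_of_up (U : D -> Prop) :
  (forall x, U x -> exists k, [/\ compact le k, le k x & forall y, le k y -> U y]) ->
  lawson_open le U.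
Proof.
move=> HU x /HU [k [ck kx kU]]; have [l cl nlx] := no_top x.
exists [:: (k, l)]; split; first by move=> kl [<-|[]].
split; first by move=> kl [<-|[]]; split.
by move=> y /(_ _ (or_introl erefl)) [/kU].
Qed.

Lemma scott_closed_lawson_closed (C : D -> Prop) : scott_closed le C -> lawson_closed le C.
Proof.
move=> HC; apply: lawson_open_of_up => x /(proj1 (HC x)) [k [ck [nCk kx]]].
by exists k; split=> // y ky Cy; apply/nCk/(scott_closed_down HC ky Cy).
Qed.

End NoTop.

End OrderFacts.

Section Domain.
Variables (Act : finType) (D : Type) (le : D -> D -> Prop)
  (iota : D -> Act -> (D -> Prop) * (D -> Prop))
  (iinv : (Act -> (D -> Prop) * (D -> Prop)) -> D).
Hypothesis Hsol : initial_solution le iota iinv.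
Variable p : nat -> D -> D.
Hypothesis p0_least : forall d x, le (p 0 d) x.
Hypothesis iota_p_succ_eq : forall n d a, paireq (iota (p n.+1 d) a) (Mmap le (p n) (iota d a)).
Hypothesis p_lub : forall d, is_lub le (fun x => exists n, x = p n d) d.
Variable bot : D.
Hypothesis bot_least : forall x, le bot x.

Local Notation L d a := (iota d a).1.
Local Notation U d a := (iota d a).2.

Lemma le_refl x : le x x.
Proof. by case: (sol_po Hsol). Qed.

Lemma le_trans x y z : le x y -> le y z -> le x z.
Proof. by case: (sol_po Hsol) => _ [+ _]; apply. Qed.

Lemma le_anti x y : le x y -> le y x -> x = y.
Proof. by case: (sol_po Hsol) => _ [_]; apply. Qed.

Lemma le_alg : algebraic le.
Proof. by case: (sol_bifinite Hsol) => _ []. Qed.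

Lemma bot_compact : compact le bot.
Proof. exact: bifinite_least_compact (sol_bifinite Hsol) le_anti bot_least. Qed.

Lemma le_iota d d' : le d d' -> forall a,
  (forall x, L d a x -> L d' a x) /\ (forall x, U d' a x -> U d a x).
Proof. exact: (sol_order Hsol d d').1. Qed.

Lemma pair_ext (P Q : (D -> Prop) * (D -> Prop)) : paireq P Q -> P = Q.
Proof. by case: P Q => [A B] [A' B'] [/pred_ext /= -> /pred_ext /= ->]. Qed.

Lemma iota_p_succ n d a : iota (p n.+1 d) a = Mmap le (p n) (iota d a).
Proof. exact/pair_ext/iota_p_succ_eq. Qed.

Lemma eq_iota d d' : (forall a, iota d a = iota d' a) -> d = d'.
Proof.
move=> dd'; rewrite -(sol_iinv_iota Hsol d) -(sol_iinv_iota Hsol d').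
by congr iinv; apply: functional_extensionality.
Qed.

Lemma iota_iinv P : (forall a, is_mixed le (P a)) -> forall a, iota (iinv P) a = P a.
Proof. by move=> Pmixed a; apply/pair_ext/(sol_iota_iinv Hsol Pmixed). Qed.

Lemma p_le n d : le (p n d) d.
Proof. by case: (p_lub d) => + _; apply; exists n. Qed.

Lemma p_mono n d d' : le d d' -> le (p n d) (p n d').
Proof.
case: n => [|n] dd'; first exact: p0_least.
apply/(sol_order Hsol) => a; rewrite !iota_p_succ /Mmap /=.
have [Ldd' Ud'd] := le_iota dd' a.
split=> x; last by case=> z [/Ud'd Uz zx]; exists z.
by apply: scott_closure_mono => y [z [/Ldd' Lz ->]]; exists z.
Qed.

Definition finite_image (h : D -> D) := exists E, forall x, List.In (h x) E.

Lemma Mmap_comp (h1 h2 h3 : D -> D) :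
  (forall x y, le x y -> le (h1 x) (h1 y)) ->
  finite_image h1 -> finite_image h2 -> finite_image h3 -> (forall x, h1 (h2 x) = h3 x) ->
  forall P, Mmap le h1 (Mmap le h2 P) = Mmap le h3 P.
Proof.
move=> h1mono [E1 HE1] [E2 HE2] [E3 HE3] h123 [LP UP].
have img_down (h : D -> D) E B : (forall x, List.In (h x) E) ->
    scott_closure le (fun y => exists x, B x /\ y = h x) =
    (fun y => exists2 a, (exists x, B x /\ a = h x) & le y a).
  by move=> hE; apply: (scott_closure_list le_refl le_trans le_alg) => _ [x [_ ->]].
rewrite /Mmap /= (img_down h2 E2) // (img_down h1 E1) // (img_down h3 E3) //.
congr pair; apply: pred_ext => z; split.
- case=> _ [x [[_ [x' [Lx' ->]] xh2x'] ->]] zh1x.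
  exists (h3 x'); first by exists x'.
  by rewrite -h123; apply: le_trans zh1x (h1mono _ _ xh2x').
- case=> _ [x [Lx ->]] zh3x; exists (h3 x) => //.
  by exists (h2 x); rewrite h123; split=> //; exists (h2 x); [exists x|apply: le_refl].
- case=> x [[x' [Ux' h2x'x]] h1xz]; exists x'; split=> //.
  by rewrite -h123; apply: le_trans (h1mono _ _ h2x'x) h1xz.
- case=> x [Ux h3xz]; exists (h2 x); rewrite h123; split=> //.
  by exists x; split=> //; apply: le_refl.
Qed.

Lemma p_finite_image n : finite_image (p n).
Proof.
elim: n => [|n [E HE]].
  by exists [:: p 0 bot] => x; left; apply: le_anti; apply: p0_least.
have [PL HPL] := list_of_subsets E.
pose pairs := List.flat_map (fun A1 => map (fun A2 =>
   (scott_closure le A1, fun z => exists2 e, A2 e & le e z)) PL) PL.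
have [FL HFL] := list_of_functions Act (fun _ : D => False, fun _ : D => False) pairs.
exists (map iinv FL) => d.
rewrite -(sol_iinv_iota Hsol (p n.+1 d)); apply: List.in_map; apply: HFL => a.
apply/List.in_flat_map; exists (fun y => exists x, L d a x /\ y = p n x); split.
  by apply: HPL => y [x [_ ->]].
apply/List.in_map_iff; exists (fun y => exists x, U d a x /\ y = p n x); split.
  rewrite iota_p_succ /Mmap; congr pair; apply: pred_ext => z; split.
    by case=> _ [x [Ux ->]] xz; exists x.
  by case=> x [Ux xz]; exists (p n x) => //; exists x.
by apply: HPL => y [x [_ ->]].
Qed.

Lemma p_comp m n d : p m (p n d) = p (minn m n) d.
Proof.
elim: m n d => [|m IH] [|n] d; rewrite ?min0n ?minn0 ?minnSS.
- by apply: le_anti; apply: p0_least.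
- by apply: le_anti; apply: p0_least.
- by apply: le_anti; [apply: p_le|apply: p0_least].
apply: eq_iota => a; rewrite !iota_p_succ.
by apply: Mmap_comp; [exact: p_mono|exact: p_finite_image..|].
Qed.

Lemma p_idem n d : p n (p n d) = p n d.
Proof. by rewrite p_comp minnn. Qed.

Lemma p_chain m n d : m <= n -> le (p m d) (p n d).
Proof. by move=> mn; rewrite -(minn_idPr mn) -p_comp; apply/p_mono/p_le. Qed.

Lemma compact_p_fixed k : compact le k -> exists M, forall m, M <= m -> p m k = k.
Proof.
move=> ck; have pk_dir := directed_mono_seq (fun i j => @p_chain i j k).
have [_ [[M ->] kpk]] := ck _ _ pk_dir (p_lub k) (le_refl k).
have pMk : p M k = k by apply: le_anti => //; apply: p_le.
by exists M => m Mm; rewrite -pMk p_comp (minn_idPr Mm).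
Qed.

Section LawsonCompactness.
Variables (S : D -> Prop) (V : D -> D -> Prop).
Hypothesis S_dir : directed le S.
Hypothesis V_anti : forall i j, S i -> S j -> le i j -> forall x, V j x -> V i x.
Hypothesis V_nonempty : forall i, S i -> exists x, V i x.
Hypothesis V_closed : forall i, S i -> lawson_closed le (V i).

(* Since each [p j] has finite image, the values [g j = p j v] can be fixed one
   level at a time so that some [v] in every [V i] realizes them (Koenig). *)
Definition realizable m (g : nat -> D) :=
  forall i, S i -> exists2 v, V i v & forall j, j < m -> p j v = g j.

Definition set_at m (g : nat -> D) e j := if j == m then e else g j.

Lemma realizable_step m g : realizable m g -> exists e, realizable m.+1 (set_at m g e).
Proof.
move=> Hg; apply: NNPP => no_ext.
pose blocks e i := forall v, V i v -> ~ (forall j, j < m.+1 -> p j v = set_at m g e j).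
have blocked e : exists2 i, S i & blocks e i.
  apply: NNPP => H1; apply: no_ext; exists e => i Si.
  by apply: NNPP => H2; apply: H1; exists i => // v Vv Hv; apply: H2; exists v.
have [E HE] := p_finite_image m.
have [k Sk Hk] : exists2 k, S k & forall e, List.In e E -> exists i, [/\ S i, le i k & blocks e i].
  apply: (directed_common S_dir).
  - by move=> e k k' [i [Si ik Bi]] kk'; exists i; split=> //; apply: le_trans ik kk'.
  - by move=> e _; have [i Si Bi] := blocked e; exists i => //; exists i; split=> //; apply: le_refl.
have [v Vv Hv] := Hg k Sk; have [i [Si ik Bi]] := Hk _ (HE v).
apply: (Bi v (V_anti Si Sk ik Vv)) => j; rewrite ltnS leq_eqVlt /set_at.
by case: eqP => [->|_ /= /Hv].
Qed.

Lemma realizable_extension m g : exists e, realizable m g -> realizable m.+1 (set_at m g e).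
Proof.
case: (classic (realizable m g)) => [/realizable_step [e He]|nr]; first by exists e.
by exists bot => /nr.
Qed.

Definition extension m g :=
  proj1_sig (constructive_indefinite_description _ (realizable_extension m g)).

Fixpoint approx m : nat -> D :=
  if m is m'.+1 then set_at m' (approx m') (extension m' (approx m')) else fun _ => bot.

Lemma realizable_approx m : realizable m (approx m).
Proof.
elim: m => [|m IH] /=; first by move=> i /V_nonempty [v Vv]; exists v.
by rewrite /extension; case: constructive_indefinite_description => e /= /(_ IH).
Qed.

Lemma approx_stable m j : j < m -> approx m j = approx j.+1 j.
Proof.
elim: m => [//|m IH]; rewrite ltnS leq_eqVlt => /orP[/eqP ->//|jm] /=.
by rewrite /set_at (ltn_eqF jm) IH.
Qed.

Definition branch j := approx j.+1 j.

Lemma realizable_branch m : realizable m branch.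
Proof.
move=> i /(realizable_approx m) [v Vv Hv]; exists v => // j jm.
by rewrite Hv // approx_stable.
Qed.

Lemma branch_mono i j : i <= j -> le (branch i) (branch j).
Proof.
move=> ij; have [[i0 Si0] _] := S_dir; have [v _ Hv] := realizable_branch j.+1 Si0.
by rewrite -(Hv i ij) -(Hv j (ltnSn j)); apply: p_chain.
Qed.

Theorem lawson_compact : exists w, forall i, S i -> V i w.
Proof.
have branch_dir := directed_mono_seq branch_mono.
have [w w_lub] := (sol_bifinite Hsol).1 _ branch_dir.
exists w => i Si; apply: NNPP => /(V_closed Si) [B [cB [wB BV]]].
have [N HN] : exists N, forall kl, List.In kl B ->
    forall m, N <= m -> le kl.1 (branch m) /\ p m kl.2 = kl.2.
  apply: eventually_all_in => kl /[dup] /cB [ck1 ck2] /wB [k1w _].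
  have [_ [[j ->] k1j]] := ck1 _ _ branch_dir w_lub k1w.
  have [M HM] := compact_p_fixed ck2.
  exists (maxn j M) => m; rewrite geq_max => /andP[jm Mm]; split; last exact: HM.
  exact: le_trans k1j (branch_mono jm).
have [v Vv Hv] := realizable_branch N.+1 Si.
have vN : branch N = p N v by rewrite Hv.
apply: (BV v) Vv => kl /[dup] /HN /(_ N (leqnn N)) [k1N pk2] /wB [_ nk2w].
split; first by apply: le_trans k1N _; rewrite vN; apply: p_le.
move=> k2v; apply: nk2w; apply: le_trans (w_lub.1 _ (ex_intro _ N erefl)).
by rewrite vN -pk2; apply: p_mono.
Qed.

End LawsonCompactness.

Lemma down_lawson_closed_scott_closed (C : D -> Prop) :
  lawson_closed le C -> scott_closed le (fun y => exists2 w, C w & le y w).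
Proof.
move=> HC x; split=> [nx|[k [_ [nk kx]] [w Cw xw]]]; last first.
  by apply: nk; exists w => //; apply: le_trans kx xw.
apply: NNPP => no_k; apply: nx.
have [w Hw] : exists w, forall k, compact le k /\ le k x -> le k w /\ C w.
  apply: (lawson_compact (le_alg x).1).
  - by move=> i j _ _ ij w [jw Cw]; split=> //; apply: le_trans ij jw.
  - move=> k [ck kx]; apply: NNPP => nw; apply: no_k; exists k; split=> //; split=> //.
    by case=> w Cw kw; apply: nw; exists w.
  - move=> k _; apply: lawson_closed_and HC.
    exact: (lawson_closed_up le_trans le_alg bot_compact bot_least).
have [[k0 Hk0] _] := (le_alg x).1.
exists w; first exact: (Hw k0 Hk0).2.
by apply: (le_alg x).2.2 => k /Hw [].
Qed.

Section NonemptyEvents.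
Variable a0 : Act.

Lemma mixed_empty : is_mixed le (fun _ => False, fun _ => False).
Proof.
split; [|split; [|split]] => /=.
- move=> x; split=> [_|[k [_ []]] //].
  by exists bot; split; [exact: bot_compact|split=> //; exact: bot_least].
- by move=> x _; exists [::]; split=> //; split=> // y _ [].
- by [].
- by move=> x; split=> // -[y []].
Qed.

Lemma mixed_full : is_mixed le (fun _ => True, fun _ => True).
Proof.
split; [|split; [|split]] => /=.
- by move=> x; split=> // -[k [_ []]].
- by move=> x [].
- by [].
- by move=> x; split=> // _; exists x; split=> //; split=> //; apply: le_refl.
Qed.

(* A top element [z] would have [L z a0] total and [U z a0] empty, which is not mixed. *)
Lemma no_top z : exists2 l, compact le l & ~ le l z.
Proof.
suff [y nyz] : exists y, ~ le y z.
  by have [c [cc _ ncz]] := compact_not_le le_alg nyz; exists c.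
apply: NNPP => ztop.
have le_z y : le y z by apply: NNPP => nyz; apply: ztop; exists y.
have := le_iota (le_z (iinv (fun _ => (fun _ => True, fun _ => True)))) a0.
rewrite iota_iinv /=; last by move=> _; apply: mixed_full.
case=> Lz _.
have := le_iota (le_z (iinv (fun _ => (fun _ => False, fun _ => False)))) a0.
rewrite iota_iinv /=; last by move=> _; apply: mixed_empty.
case=> _ Uz.
have [_ [_ [_ Lmixed]]] := sol_valid Hsol z a0.
by have [w [_ [/Uz]]] := (Lmixed z).1 (Lz z I).
Qed.

Section DirectedSup.
Variables (S : D -> Prop) (s : D).
Hypothesis S_dir : directed le S.
Hypothesis S_lub : is_lub le S s.

Definition sup_L a := scott_closure le (fun y => exists2 x, S x & L x a y).
Definition sup_U a y := forall x, S x -> U x a y.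

Lemma sup_U_closed a : lawson_closed le (sup_U a).
Proof.
apply: lawson_closed_forall => x; apply: lawson_closed_forall => _.
exact: (sol_valid Hsol x a).2.1.
Qed.

Lemma L_below_sup_meet a x y : S x -> L x a y ->
  exists w, [/\ sup_L a w, sup_U a w & le y w].
Proof.
move=> Sx Lxy.
have [w Hw] : exists w, forall i, S i -> le y w /\ sup_L a w /\ U i a w.
  apply: (lawson_compact S_dir).
  - by move=> i j _ _ ij w [yw [Lw Ujw]]; split=> //; split=> //; apply: (le_iota ij a).2.
  - move=> i Si; have [k [Sk [xk ik]]] := S_dir.2 _ _ Sx Si.
    have [_ [_ [_ Lmixed]]] := sol_valid Hsol k a.
    have [w [Lkw [Ukw yw]]] := (Lmixed y).1 ((le_iota xk a).1 _ Lxy).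
    exists w; split=> //; split; first by apply: scott_closure_ub; exists k.
    exact: (le_iota ik a).2.
  - move=> i _; apply: lawson_closed_and; first exact: (lawson_closed_up le_trans le_alg bot_compact bot_least).
    apply: lawson_closed_and; last exact: (sol_valid Hsol i a).2.1.
    exact: scott_closed_lawson_closed le_trans no_top _ (scott_closure_closed le_trans _).
by have [yw [Lw _]] := Hw x Sx; exists w; split=> // i /Hw [_ []].
Qed.

Lemma sup_mixed a : is_mixed le (sup_L a, sup_U a).
Proof.
split; [|split; [|split]] => /=.
- exact: scott_closure_closed le_trans _.
- exact: sup_U_closed.
- by move=> y z Uy yz x Sx; apply: (sol_valid Hsol x a).2.2.1 (Uy x Sx) yz.
move=> y; split=> [Ly|[w [Lw [_ yw]]]]; last exact: scott_closure_down le_trans _ _ _ yw Lw.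
suff [w [Lw Uw] yw] : exists2 w, sup_L a w /\ sup_U a w & le y w by exists w.
have meet_down_closed : scott_closed le (fun y => exists2 w, sup_L a w /\ sup_U a w & le y w).
  apply/down_lawson_closed_scott_closed/lawson_closed_and; last exact: sup_U_closed.
  exact: scott_closed_lawson_closed le_trans no_top _ (scott_closure_closed le_trans _).
apply: (scott_closure_least meet_down_closed _ Ly) => y' [x Sx Lxy'].
by have [w [Lw Uw y'w]] := L_below_sup_meet Sx Lxy'; exists w.
Qed.

Lemma iota_sup a : (forall y, L s a y -> sup_L a y) /\ (forall y, sup_U a y -> U s a y).
Proof.
pose z := iinv (fun a => (sup_L a, sup_U a)).
have iota_z b : iota z b = (sup_L b, sup_U b) by apply: iota_iinv => b'; apply: sup_mixed.
have sz : le s z.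
  apply: S_lub.2 => x Sx; apply/(sol_order Hsol) => b; rewrite iota_z /=.
  by split=> y; [move=> Lxy; apply: scott_closure_ub; exists x|apply].
by have := le_iota sz a; rewrite iota_z.
Qed.

End DirectedSup.

Definition sup_attained (f : D -> D) := forall S s,
  directed le S -> is_lub le S s -> exists2 x, S x & le (f s) (f x).

Lemma compact_of_sup_attained n d : sup_attained (p n) -> compact le (p n d).
Proof.
move=> pn S s Sdir Slub ks; have [x Sx sx] := pn S s Sdir Slub.
exists x; split=> //; rewrite -p_idem.
exact: le_trans (p_mono n ks) (le_trans sx (p_le n x)).
Qed.

Lemma scott_closed_p_preimage n C :
  sup_attained (p n) -> scott_closed le C -> scott_closed le (fun y => C (p n y)).
Proof.
move=> pn HC x; split=> [nCx|[k [_ [nCk kx]] Cx]].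
  have [k [ck kx] xk] := pn _ _ (le_alg x).1 (le_alg x).2.
  by exists k; split=> //; split=> // Ck; apply/nCx/(scott_closed_down le_trans HC xk Ck).
exact/nCk/(scott_closed_down le_trans HC (p_mono n kx) Cx).
Qed.

Lemma lawson_closed_p_below n e : sup_attained (p n) -> lawson_closed le (fun v => le (p n v) e).
Proof.
move=> pn; apply: (lawson_open_of_up no_top) => v nv.
have [k [ck kv] vk] := pn _ _ (le_alg v).1 (le_alg v).2.
by exists k; split=> // y ky ye; apply/nv/(le_trans vk (le_trans (p_mono n ky) ye)).
Qed.

Lemma sup_attained_succ n : sup_attained (p n) -> sup_attained (p n.+1).
Proof.
move=> pn S s Sdir Slub.
have [E HE] := p_finite_image n.+1.
have [x0 Sx0 x0max] := directed_finite_image_max le_refl le_trans Sdir (@p_mono n.+1) HE.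
exists x0 => //; apply/(sol_order Hsol) => a; rewrite !iota_p_succ /Mmap /=.
have [Ls_sup supU_Us] := iota_sup Sdir Slub a.
have x0max_a x Sx := le_iota (x0max x Sx) a.
split.
- apply: (scott_closure_least (scott_closure_closed le_trans _)) => _ [x [Lsx ->]].
  apply: (scott_closure_least (scott_closed_p_preimage pn (scott_closure_closed le_trans _)) _ (Ls_sup _ Lsx)).
  move=> y [x' Sx' Lx'y]; have := (x0max_a x' Sx').1 (p n y); rewrite !iota_p_succ /=; apply.
  by apply: scott_closure_ub; exists y.
- move=> z [y [Ux0y yz]].
  have [w Hw] : exists w, forall i, S i -> U i a w /\ le (p n w) (p n y).
    apply: (lawson_compact Sdir).
    + by move=> i j _ _ ij w [Ujw wy]; split=> //; apply: (le_iota ij a).2.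
    + move=> i Si; have := (x0max_a i Si).2 (p n y); rewrite !iota_p_succ /=.
      by case=> [|w [Uiw wy]]; [exists y; split=> //; apply: le_refl|exists w].
    + move=> i _; apply: lawson_closed_and; first exact: (sol_valid Hsol i a).2.1.
      exact: lawson_closed_p_below.
  exists w; split; first by apply: supU_Us => i /Hw [].
  by have [_ wy] := Hw x0 Sx0; apply: le_trans wy yz.
Qed.

Lemma sup_attained_p n : sup_attained (p n).
Proof.
elim: n => [|n IH]; last exact: sup_attained_succ.
by move=> S s [[x Sx] _] _; exists x => //; apply: p0_least.
Qed.

Lemma compact_p n d : compact le (p n d).
Proof. exact/compact_of_sup_attained/sup_attained_p. Qed.

Fixpoint depth (f : form Act) : nat :=
  match f with
  | Ftt => 0
  | Fneg g => depth g
  | Fdia _ g => (depth g).+1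
  | Fand g h => maxn (depth g) (depth h)
  end.

Lemma sat_mono f :
  (forall d d', le d d' -> sat iota Ma f d -> sat iota Ma f d') /\
  (forall d d', le d d' -> sat iota Mc f d' -> sat iota Mc f d).
Proof.
elim: f => [|g [IHa IHc]|a g [IHa IHc]|g [IGa IGc] h [IHa IHc]] /=.
- by [].
- by split=> d d' dd' nd Hd; apply: nd; [apply: IHc dd' Hd|apply: IHa dd' Hd].
- split=> d d' dd' [y [Ty Hy]]; exists y; split=> //.
    exact: (le_iota dd' a).1.
  exact: (le_iota dd' a).2.
- by split=> d d' dd' [Hg Hh]; split; [apply: IGa dd' Hg|apply: IHa dd' Hh|
                                      apply: IGc dd' Hg|apply: IHc dd' Hh].
Qed.

(* [p n] truncates the transition tree of [d] at depth [n]. *)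
Lemma sat_p f n : depth f <= n -> forall m d, sat iota m f d <-> sat iota m f (p n d).
Proof.
elim: f n => [|g IH|a g IH|g IG h IH] n /= Hn m d.
- by [].
- by have := IH n Hn (negm m) d; tauto.
- case: n Hn => // n Hn; case: m => /=; split.
  + case=> y [Ly Hy]; exists (p n y); split; last exact: (IH n Hn Ma y).1.
    by rewrite iota_p_succ /=; apply: scott_closure_ub; exists y.
  + by case=> y [Ly Hy]; exists y; split=> //; apply: (le_iota (p_le n.+1 d) a).1.
  + case=> y [Uy Hy]; exists (p n y); split; last exact: (IH n Hn Mc y).1.
    by rewrite iota_p_succ /=; exists y; split=> //; apply: le_refl.
  + case=> z []; rewrite iota_p_succ /= => -[y [Uy yz]] Hz.
    by exists y; split=> //; apply/(IH n Hn Mc y).2/((sat_mono g).2 _ _ yz Hz).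
- have Hg : depth g <= n by apply: leq_trans Hn; apply: leq_maxl.
  have Hh : depth h <= n by apply: leq_trans Hn; apply: leq_maxr.
  by have := IG n Hg m d; have := IH n Hh m d; tauto.
Qed.

Lemma clopen_of_p_invariant (P : D -> Prop) n :
  (forall x y, le x y -> P x -> P y) -> (forall d, P d <-> P (p n d)) -> lawson_clopen le P.
Proof.
move=> Pup Pp; split.
  apply: (lawson_open_of_up no_top) => x Px; exists (p n x); split.
  - exact: compact_p.
  - exact: p_le.
  - by move=> y xy; apply: Pup xy ((Pp x).1 Px).
have [E HE] := p_finite_image n.
have [E' HE'] := list_filter_exists P E.
have -> : P = fun y => exists2 e, List.In e E' & le e y.
  apply: pred_ext => y; split=> [Py|[e /HE' [_ Pe] ey]]; last exact: Pup ey Pe.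
  by exists (p n y); [apply/HE'; split=> //; exact: (Pp y).1|apply: p_le].
apply: lawson_closed_list_union => e _.
exact: (lawson_closed_up le_trans le_alg bot_compact bot_least).
Qed.

Lemma sem_clopen f : lawson_clopen le (sem iota Ma f) /\ lawson_clopen le (sem iota Mc f).
Proof.
have Ma_clopen g : lawson_clopen le (sem iota Ma g).
  by apply: (clopen_of_p_invariant (n := depth g)); [apply: (sat_mono g).1|apply: sat_p].
split=> //.
have -> : sem iota Mc f = (fun d => ~ sem iota Ma (Fneg f) d).
  by apply: pred_ext => d; rewrite /sem /=; split=> [Hd /(_ Hd)|/NNPP].
exact/lawson_clopen_compl/Ma_clopen.
Qed.

Lemma C_Phi_closed : lawson_closed le (C_Phi iota).
Proof.
rewrite /C_Phi; do 3 apply: lawson_closed_forall => ?.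
by apply: lawson_closed_forall => _; apply: (sem_clopen _).1.2.
Qed.

End NonemptyEvents.
End Domain.

Theorem lemma3p17 (Act : finType) (D : Type) (le : D -> D -> Prop)
  (iota : D -> Act -> (D -> Prop) * (D -> Prop))
  (iinv : (Act -> (D -> Prop) * (D -> Prop)) -> D)
  (Hsol : initial_solution le iota iinv) :
  (forall phi : form Act,
     lawson_clopen le (sem iota Ma phi) /\ lawson_clopen le (sem iota Mc phi)) /\
  lawson_closed le (C_Phi iota).
Proof.
have [p [p0 [pS plub]]] := sol_minimal Hsol.
pose bot := p 0 (iinv (fun _ => (fun _ => False, fun _ => False))).
have bot_least x : le bot x by apply: p0.
case: (pickP (fun _ : Act => true)) => [a0 _|noAct].
  split; first exact: (sem_clopen Hsol p0 pS plub bot_least a0).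
  exact: (C_Phi_closed Hsol p0 pS plub bot_least a0).
have D_subsingleton (x y : D) : x = y.
  case: (sol_po Hsol) => _ [_ le_anti]; apply: le_anti; apply/(sol_order Hsol) => a;
  by have := noAct a.
split=> [phi|]; first by split; split; apply: lawson_open_subsingleton.
exact: lawson_open_subsingleton.
Qed.
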